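(* Let $G$ be a connected graph with vertex set $\{u_1,\dots,u_n\}$, $n\ge2$, and let $\mathcal{H}=\{H_1,\dots,H_n\}$ be a family of graphs. Then $\dim_l(G\circ\mathcal{H})=\sum_{i=1}^n\operatorname{adim}_l(H_i)$ if and only if (a) for every two adjacent vertices $u_i,u_j\in I$ not belonging to the same true twin equivalence class of $G$ there exists $u\in V(G)-(V_E\cup\{u_i,u_j\})$ with $d_G(u,u_i)\ne d_G(u,u_j)$, and (b) each true twin equivalence class of $G$ contains at most one vertex $u_i$ with $H_i\in\mathcal{G}$.
   Context: All graphs are finite and simple with at least one vertex. $d_G$ is shortest-path distance ($+\infty$ between components), $d_{G,2}=\min\{d_G,2\}$; $s$ distinguishes $x,y$ w.r.t. $d$ if $d(s,x)\ne d(s,y)$. $\dim_l(G)$: minimum size of $S\subseteq V(G)$ such that any two adjacent vertices are distinguished w.r.t. $d_G$ by some vertex of $S$. $\operatorname{adim}_l(H)$: minimum size of $S\subseteq V(H)$ such that any two adjacent vertices are distinguished w.r.t. $d_{H,2}$ by some vertex of $S$; minimum such sets are local adjacency bases. $\Phi$: class of edgeless graphs. $\mathcal{G}$: class of graphs $H$ such that every local adjacency basis $B$ of $H$ satisfies $B\subseteq N_H(v)$ for some $v\in V(H)$. True twins: $N[x]=N[y]$; $T(G)$ is the union of the non-singleton true twin equivalence classes of $G$. $V_E=\{u_i\in V(G)-T(G): H_i\in\Phi\}$, $I=\{u_i\in V(G): H_i\in\mathcal{G}\}$. Lexicographic product $G\circ\mathcal{H}$: vertex set $\bigcup_i\{u_i\}\times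 V(H_i)$, $(u_i,v)\sim(u_j,w)$ iff $u_iu_j\in E(G)$, or $i=j$ and $vw\in E(H_i)$. *)

From mathcomp Require Import all_boot.
Set Implicit Arguments. Unset Strict Implicit. Unset Printing Implicit Defensive.

Section Metric.
Variables (T : finType) (e : rel T).

Fixpoint walkn (k : nat) (x y : T) : bool :=
  if k is k'.+1 then [exists z, e x z && walkn k' z y] else x == y.

(* shortest-path distance; None encodes +infinity (different components).
   A shortest walk in a finite graph has length < #|T|. *)
Definition dist (x y : T) : option nat :=
  ohead [seq k <- iota 0 #|T| | walkn k x y].

Definition dist2 (x y : T) : nat :=
  if dist x y is Some k then minn k 2 else 2.

Definition local_resolving (S : {set T}) : bool :=
  [forall x, forall y, e x y ==> [exists s in S, dist s x != dist s y]].

Definition local_adj_gen (S : {set T}) : bool :=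
  [forall x, forall y, e x y ==> [exists s in S, dist2 s x != dist2 s y]].

(* minimum sizes; the full vertex set always qualifies *)
Definition ldim : nat :=
  \big[minn/#|T|]_(S : {set T} | local_resolving S) #|S|.

Definition ladim : nat :=
  \big[minn/#|T|]_(S : {set T} | local_adj_gen S) #|S|.

Definition local_adj_basis (B : {set T}) : Prop :=
  local_adj_gen B /\ #|B| = ladim.

Definition open_nb (v : T) : {set T} := [set w | e v w].
Definition closed_nb (v : T) : {set T} := [set w | (w == v) || e v w].

Definition true_twins (x y : T) : bool := closed_nb x == closed_nb y.

Definition in_TG (x : T) : Prop := exists y, y != x /\ true_twins x y.

Definition edgeless : Prop := forall x y, ~~ e x y.

Definition in_calG : Prop :=
  forall B, local_adj_basis B -> exists v, B \subset open_nb v.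

End Metric.

Record sgraph := SGraph {
  svert :> finType;
  sadj : rel svert;
  sadj_sym : symmetric sadj;
  sadj_irr : irreflexive sadj;
  svert_nonempty : 0 < #|svert| }.

Definition lex_vert (T : finType) (H : T -> sgraph) : finType :=
  {i : T & svert (H i)}.

Definition lex_adj (T : finType) (e : rel T) (H : T -> sgraph) :
  rel (lex_vert H) :=
  fun p q => e (tag p) (tag q) ||
    ((tag p == tag q) && sadj (tagged p) (tagged_as p q)).
Arguments lex_adj {T} e H.

(* Inside a fibre {u_i} x V(H_i) of the lexicographic product the distance is
   d_{H_i,2}, and between different fibres it is the distance of G.  Hence every
   local resolving set S of G o H meets each fibre in a local adjacency generator
   of H_i, so dim_l >= sum adim_l, with equality iff some minimum S meets every
   fibre in a local adjacency basis.  If H_i, H_j are in the class G these bases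
   lie in open neighbourhoods, and then no vertex of the fibres of u_i, u_j
   separates an edge between these fibres: the separator must come from a third,
   nonempty fibre, which gives (a) and, for true twins, contradicts (b).
   Conversely, take in each fibre a basis lying in no open neighbourhood whenever
   possible.  Such a basis separates every edge leaving its fibre; for the other
   edges (a) yields a separator u outside V_E, and if H_u is edgeless (b) lets us
   move u to a true twin whose graph has an edge, hence a nonempty basis. *)

From HB Require Import structures.
From mathcomp Require Import all_boot.
From Stdlib Require Import Classical.
Set Implicit Arguments. Unset Strict Implicit. Unset Printing Implicit Defensive.

Lemma ohead_filter_iota (P : pred nat) m n :
  P m -> m < n -> (forall k, k < m -> ~~ P k) ->
  ohead [seq k <- iota 0 n | P k] = Some m.
Proof.
move=> Pm lt_mn below_m.
rewrite -(subnKC (ltnW lt_mn)) iotaD filter_cat add0n.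
have -> : [seq k <- iota 0 m | P k] = [::].
  apply/eqP; rewrite -(negbK (_ == _)) -has_filter.
  by apply/hasPn=> k; rewrite mem_iota => /below_m.
by rewrite -subn_gt0 in lt_mn; case: (n - m) lt_mn => //= n' _; rewrite Pm.
Qed.

Lemma card_tagged_set (I : finType) (T_ : I -> finType) (A : {set {i : I & T_ i}}) :
  #|A| = \sum_i #|[set x : T_ i | Tagged T_ x \in A]|.
Proof.
rewrite -sum1_card (partition_big (@tag I T_) predT) //=.
apply: eq_bigr => i _.
have Tagged_inj : injective (@Tagged I i T_) by move=> x y; apply: eq_from_Tagged.
rewrite -(card_imset _ Tagged_inj) -sum1_card; apply: eq_bigl => -[j y] /=.
apply/andP/imsetP => [[yA /eqP ji]|[x]]; first by subst j; exists y; rewrite ?inE.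
by rewrite inE => xA [ji]; subst j => ->; rewrite xA.
Qed.

HB.instance Definition _ := SemiGroup.isComLaw.Build nat minn minnA minnC.

Section Minimum.
Variables (I : finType) (P : pred I) (F : I -> nat) (n : nat).

Lemma bigmin_leq i : P i -> \big[minn/n]_(j | P j) F j <= F i.
Proof. by move=> Pi; rewrite (bigD1 i) //= geq_minl. Qed.

Lemma bigmin_attained i0 : P i0 -> F i0 <= n ->
  exists2 i, P i & F i = \big[minn/n]_(j | P j) F j.
Proof.
move=> Pi0 le_i0n; case: (arg_minnP F Pi0) => i Pi min_i; exists i => //.
apply/eqP; rewrite eqn_leq bigmin_leq // andbT.
elim/big_ind: _ => [|m1 m2 le_i1 le_i2|j /min_i //]; last by rewrite /= leq_min le_i1.
exact: leq_trans (min_i _ Pi0) le_i0n.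
Qed.

End Minimum.

Section Walks.
Variables (T : finType) (e : rel T).

Lemma walknP k x y :
  reflect (exists p, [/\ size p = k, path e x p & last x p = y]) (walkn e k x y).
Proof.
elim: k x => [|k IHk] x /=.
  by apply: (iffP eqP) => [<-|[[|z p] [] // _ _ <-]]; first by exists [::].
apply: (iffP existsP) =>
    [[z /andP[exz /IHk[p [<- pp <-]]]]|[[|z p] [//= [sz] /andP[exz pp] lp]]].
  by exists (z :: p); rewrite /= exz pp.
by exists z; rewrite exz; apply/IHk; exists p.
Qed.

Lemma walkn_shorten k x y : walkn e k x y -> exists2 k', k' < #|T| & walkn e k' x y.
Proof.
case/walknP=> p [_ pp lp]; case: (shortenP pp) lp => p' pp' up' _ lp'.
exists (size p'); last by apply/walknP; exists p'.
by have := max_card (mem (x :: p')); rewrite (card_uniqP up').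
Qed.

Variant dist_spec x y : option nat -> Prop :=
  | DistSome m of walkn e m x y & (forall k, walkn e k x y -> m <= k) :
      dist_spec x y (Some m)
  | DistNone of (forall k, ~~ walkn e k x y) : dist_spec x y None.

Lemma distP x y : dist_spec x y (dist e x y).
Proof.
rewrite /dist; case: (boolP [exists k : 'I_#|T|, walkn e k x y]) => [|no_walk].
  case/existsP=> k Wk; case: (ex_minnP (ex_intro (fun k => walkn e k x y) _ Wk)).
  move=> m Wm min_m; rewrite (@ohead_filter_iota _ m); first by constructor.
  - exact: Wm.
  - by have [k' lt_k' /min_m le_mk'] := walkn_shorten Wm; exact: leq_ltn_trans le_mk' lt_k'.
  by move=> k' lt_k'm; apply/negP=> /min_m; rewrite leqNgt lt_k'm.
have no_walk' k : ~~ walkn e k x y.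
  apply/negP=> /walkn_shorten[k' lt_k' Wk']; case/existsP: no_walk.
  by exists (Ordinal lt_k').
suff -> : [seq k <- iota 0 #|T| | walkn e k x y] = [::] by constructor.
by apply/eqP; rewrite -(negbK (_ == _)) -has_filter; apply/hasPn=> k _.
Qed.

Lemma dist_least m x y : walkn e m x y -> (forall k, walkn e k x y -> m <= k) ->
  dist e x y = Some m.
Proof.
move=> Wm min_m; case: distP => [m' Wm' min_m'|no_walk]; last by move: (no_walk m); rewrite Wm.
by rewrite (@anti_leq m m') // min_m // min_m'.
Qed.

Lemma dist_refl x : dist e x x = Some 0.
Proof. by apply: dist_least => /=. Qed.

Lemma dist_neq0 x y : x != y -> dist e x y != Some 0.
Proof. by move=> nxy; case: distP => // -[|m] //= /eqP xy; rewrite xy eqxx in nxy. Qed.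

Lemma walknSr k x y : walkn e k.+1 x y = [exists z, walkn e k x z && e z y].
Proof.
apply/walknP/existsP => [[p [sz pp lp]]|[z /andP[/walknP[p [sz pp lp]] ezy]]].
  case/lastP: p sz pp lp => [//|p z]; rewrite size_rcons rcons_path last_rcons.
  case=> sz /andP[pp ezy] zy; exists (last x p); rewrite -zy ezy andbT.
  by apply/walknP; exists p.
by exists (rcons p y); rewrite size_rcons rcons_path last_rcons sz pp lp ezy.
Qed.

End Walks.

Lemma eq_dist_walkn (T1 T2 : finType) (e1 : rel T1) (e2 : rel T2) x1 y1 x2 y2 :
  (forall k, walkn e1 k x1 y1 -> exists2 k', k' <= k & walkn e2 k' x2 y2) ->
  (forall k, walkn e2 k x2 y2 -> exists2 k', k' <= k & walkn e1 k' x1 y1) ->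
  dist e1 x1 y1 = dist e2 x2 y2.
Proof.
move=> walk12 walk21.
case: distP => [m1 W1 min1|no1]; case: distP => [m2 W2 min2|no2].
- have [k2 le_k2m2 /min1 le_m1k2] := walk21 _ W2.
  have [k1 le_k1m1 /min2 le_m2k1] := walk12 _ W1.
  by rewrite (@anti_leq m1 m2) // (leq_trans le_m1k2 le_k2m2) (leq_trans le_m2k1 le_k1m1).
- by have [k _ Wk] := walk12 _ W1; move: (no2 k); rewrite Wk.
- by have [k _ Wk] := walk21 _ W2; move: (no1 k); rewrite Wk.
- by [].
Qed.

Section Distance.
Variables (T : finType) (e : rel T).
Hypotheses (sym_e : symmetric e) (irr_e : irreflexive e).

Lemma walkn_sym k x y : walkn e k x y = walkn e k y x.
Proof.
elim: k x y => [|k IHk] x y; first by rewrite /= eq_sym.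
rewrite walknSr /=; apply/existsP/existsP => -[z /andP[W ez]];
  by exists z; rewrite sym_e IHk W ez.
Qed.

Lemma dist_sym x y : dist e x y = dist e y x.
Proof. by apply: eq_dist_walkn => k W; exists k; rewrite // walkn_sym. Qed.

Lemma dist_adj x y : e x y -> dist e x y = Some 1.
Proof.
move=> exy; apply: dist_least => [|[|//] /eqP xy]; last by rewrite xy irr_e in exy.
by apply/existsP; exists y; rewrite exy /=.
Qed.

Lemma dist_two x y : x != y -> ~~ e x y -> walkn e 2 x y -> dist e x y = Some 2.
Proof.
move=> nxy nexy W2; apply: dist_least => // -[|[|k]] //=; first by rewrite (negbTE nxy).
by case/existsP=> z /andP[exz /eqP zy]; rewrite -zy exz in nexy.
Qed.

Lemma dist2E x y : dist2 e x y = if x == y then 0 else if e x y then 1 else 2.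
Proof.
rewrite /dist2; have [<-|nxy] := eqVneq x y; first by rewrite dist_refl.
case: ifPn => [/dist_adj -> //|nexy].
case: distP => // -[|[|m]] W _ //=; first by move: W nxy => /= ->.
by case/existsP: W => z /andP[exz /eqP zy]; rewrite -zy exz in nexy.
Qed.

Lemma exists_neighbor x : (forall y z, connect e y z) -> 1 < #|T| -> exists z, e x z.
Proof.
move=> conn; rewrite (cardD1 x) inE add1n ltnS => /card_gt0P[y].
rewrite !inE andbT => nyx.
case/connectP: (conn x y) => -[|z p] /= => [_ yx|/andP[exz _] _]; last by exists z.
by rewrite yx eqxx in nyx.
Qed.

Lemma local_resolvingT : local_resolving e setT.
Proof.
apply/forallP=> x; apply/forallP=> y; apply/implyP=> exy.
apply/existsP; exists x; rewrite inE dist_refl eq_sym dist_neq0 //.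
by apply: contraTneq exy => ->; rewrite irr_e.
Qed.

Lemma true_twins_adj x y : true_twins e x y -> x != y -> e x y.
Proof.
move=> /eqP tw nxy; have : y \in closed_nb e y by rewrite inE eqxx.
by rewrite -tw inE eq_sym (negbTE nxy).
Qed.

Lemma twin_dist x y z : true_twins e x y -> z != x -> z != y -> dist e x z = dist e y z.
Proof.
(* A walk from x' starts with a step to y' itself or to a neighbour of y'. *)
have shift x' y' : true_twins e x' y' -> z != x' -> z != y' ->
    forall m, walkn e m x' z -> exists2 m', m' <= m & walkn e m' y' z.
  move=> /eqP tw nzx nzy [|m] /=; first by move=> /eqP xz; rewrite xz eqxx in nzx.
  case/existsP=> w /andP[exw W]; have [wy|nwy] := eqVneq w y'; first by exists m; rewrite -?wy.
  have : w \in closed_nb e x' by rewrite inE exw orbT.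
  rewrite tw inE (negbTE nwy) => /= eyw.
  by exists m.+1 => //; apply/existsP; exists w; rewrite eyw; exact: W.
move=> tw nzx nzy; apply: eq_dist_walkn; first exact: shift.
by apply: shift => //; rewrite /true_twins eq_sym.
Qed.

Lemma twin_separates u y i j : true_twins e u y -> u != y -> e i j ->
  u != i -> u != j -> dist e u i != dist e u j ->
  [/\ y != i, y != j & dist e y i != dist e y j].
Proof.
move=> tw nuy.
have y_outside i' j' : e i' j' -> u != j' -> dist e u i' != dist e u j' -> y != i'.
  move=> eij nuj; apply: contraNneq => yi; rewrite -yi in eij *.
  have : j' \in closed_nb e y by rewrite inE eij orbT.
  rewrite -(eqP tw) inE eq_sym (negbTE nuj) /= => euj.
  by rewrite !dist_adj ?(true_twins_adj tw).
move=> eij nui nuj sep.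
have yi : y != i := y_outside _ _ eij nuj sep.
have yj : y != j by apply: y_outside nui _; rewrite 1?sym_e 1?eq_sym.
have dist_ui : dist e u i = dist e y i by apply: (twin_dist tw); rewrite eq_sym.
have dist_uj : dist e u j = dist e y j by apply: (twin_dist tw); rewrite eq_sym.
by rewrite -dist_ui -dist_uj.
Qed.

End Distance.

Section Dimensions.
Variables (T : finType) (e : rel T).

Lemma ldim_leq S : local_resolving e S -> ldim e <= #|S|.
Proof. exact: bigmin_leq. Qed.

Lemma ladim_leq B : local_adj_gen e B -> ladim e <= #|B|.
Proof. exact: bigmin_leq. Qed.

Lemma local_adj_gen0_edgeless : local_adj_gen e set0 -> edgeless e.
Proof.
move=> /forallP gen0 x y; apply/negP=> exy.
by have /existsP[s] := implyP (forallP (gen0 x) y) exy; rewrite inE.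
Qed.

Lemma ladim_edgeless : edgeless e -> ladim e = 0.
Proof.
move=> noedge; apply/eqP; rewrite -leqn0 -(cards0 T) ladim_leq //.
by apply/forallP=> x; apply/forallP=> y; rewrite (negbTE (noedge x y)).
Qed.

Lemma in_calG_edgeless : 0 < #|T| -> edgeless e -> in_calG e.
Proof.
move=> /card_gt0P[v _] noedge B [_ /eqP]; rewrite ladim_edgeless // cards_eq0 => /eqP->.
by exists v; rewrite sub0set.
Qed.

Hypothesis irr_e : irreflexive e.

Lemma ldim_attained : exists2 S, local_resolving e S & #|S| = ldim e.
Proof. by apply: bigmin_attained (local_resolvingT irr_e) _; rewrite cardsT. Qed.

Lemma local_adj_genT : local_adj_gen e setT.
Proof.
apply/forallP=> x; apply/forallP=> y; apply/implyP=> exy.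
apply/existsP; exists x; rewrite inE !dist2E // eqxx exy.
by case: (x =P y) exy => // ->; rewrite irr_e.
Qed.

Lemma exists_local_adj_basis : exists B, local_adj_basis e B.
Proof.
have [B gen cardB] : exists2 B, local_adj_gen e B & #|B| = ladim e.
  by apply: bigmin_attained local_adj_genT _; rewrite cardsT.
by exists B.
Qed.

Definition uncovered (B : {set T}) := [forall v, ~~ (B \subset open_nb e v)].

Definition spread_basis : {set T} :=
  if [pick B | local_adj_gen e B && (#|B| == ladim e) & uncovered B] is Some B then B
  else odflt set0 [pick B | local_adj_gen e B & #|B| == ladim e].

Lemma spread_basisP : local_adj_basis e spread_basis.
Proof.
rewrite /spread_basis; case: pickP => [B /andP[/andP[gen /eqP cardB] _] //|_].
case: pickP => [B /andP[gen /eqP cardB] //|no_basis].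
have [B [gen cardB]] := exists_local_adj_basis.
by move: (no_basis B); rewrite gen cardB eqxx.
Qed.

Lemma spread_basis_uncovered : ~ in_calG e -> uncovered spread_basis.
Proof.
move=> notG; rewrite /spread_basis; case: pickP => [B /andP[] //|no_spread].
case: notG => B [gen cardB]; move: (no_spread B).
rewrite gen cardB eqxx /= => /negbT; rewrite negb_forall => /existsP[v].
by rewrite negbK => sub; exists v.
Qed.

End Dimensions.

Section LexProduct.
Variables (T : finType) (e : rel T) (H : T -> sgraph).
Hypotheses (sym_e : symmetric e) (irr_e : irreflexive e).

Local Notation L := (lex_vert H).
Local Notation E := (lex_adj e H).

Definition lexv i (x : H i) : L := Tagged (fun i => svert (H i)) x.

Lemma lexv_inj i : injective (@lexv i).
Proof. by move=> x y; apply: eq_from_Tagged. Qed.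

Lemma lex_adjE i j (x : H i) (y : H j) :
  E (lexv x) (lexv y) = e i j || (i == j) && sadj x (tagged_as (lexv x) (lexv y)).
Proof. by []. Qed.

Lemma lex_adj_fibre i (x y : H i) : E (lexv x) (lexv y) = sadj x y.
Proof. by rewrite lex_adjE irr_e eqxx tagged_asE. Qed.

Lemma lex_adj_irr : irreflexive E.
Proof. by case=> i x; rewrite -[existT _ i x]/(lexv x) lex_adj_fibre sadj_irr. Qed.

Lemma walkn_tag m p q :
  walkn E m p q -> exists2 m', m' <= m & walkn e m' (tag p) (tag q).
Proof.
elim: m p => [|m IHm] p /=; first by move=> /eqP->; exists 0 => //=.
case/existsP=> r /andP[/orP[epr|/andP[/eqP pr _]] /IHm[m' le_m'm W]].
  by exists m'.+1 => //; apply/existsP; exists (tag r); rewrite epr.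
by exists m'; rewrite ?pr // leqW.
Qed.

Lemma walkn_lexv m i j (x : H i) (y : H j) :
  walkn e m.+1 i j -> walkn E m.+1 (lexv x) (lexv y).
Proof.
elim: m i x => [|m IHm] i x /existsP[k /andP[eik W]].
  by move/eqP: W => kj; subst k; apply/existsP; exists (lexv y); rewrite lex_adjE eik eqxx.
have [z _] := card_gt0P (svert_nonempty (H k)).
by apply/existsP; exists (lexv z); rewrite lex_adjE eik; exact: IHm.
Qed.

Lemma dist_lexv i j (x : H i) (y : H j) : i != j -> dist E (lexv x) (lexv y) = dist e i j.
Proof.
move=> nij; apply: eq_dist_walkn => [m /walkn_tag //|[|m] W].
  by rewrite /= (negbTE nij) in W.
by exists m.+1; last exact: walkn_lexv.
Qed.

Hypothesis no_isolated : forall i, exists j, e i j.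

Lemma dist_lexv_fibre i (x y : H i) :
  dist E (lexv x) (lexv y) = Some (dist2 (@sadj (H i)) x y).
Proof.
rewrite (dist2E (@sadj_irr _)); have [<-|nxy] := eqVneq x y; first exact: dist_refl.
rewrite -lex_adj_fibre; case: ifPn => [exy|nexy]; first exact: dist_adj lex_adj_irr _ _ exy.
apply: dist_two => //; first by apply: contra nxy => /eqP/lexv_inj ->.
(* The walk of length two passes through any vertex of a neighbouring fibre. *)
have [j eij] := no_isolated i; have [z _] := card_gt0P (svert_nonempty (H j)).
apply/existsP; exists (lexv z); rewrite lex_adjE eij.
by apply/existsP; exists (lexv y); rewrite lex_adjE sym_e eij /= eqxx.
Qed.

Definition slice (S : {set L}) i : {set H i} := [set x | lexv x \in S].

Lemma card_slices (S : {set L}) : #|S| = \sum_i #|slice S i|.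
Proof. exact: card_tagged_set. Qed.

Lemma slice_local_adj_gen (S : {set L}) i :
  local_resolving E S -> local_adj_gen (@sadj (H i)) (slice S i).
Proof.
move=> /forallP res; apply/forallP=> x; apply/forallP=> y; apply/implyP=> xy.
have /implyP := forallP (res (lexv x)) (lexv y); rewrite lex_adj_fibre => /(_ xy).
case/existsP=> -[k z]; rewrite -[existT _ k z]/(lexv z) => /andP[zS].
have [ki|nki] := eqVneq k i; last by rewrite !dist_lexv ?eqxx.
subst k; rewrite !dist_lexv_fibre => sep; apply/existsP; exists z; rewrite inE zS.
by apply: contra sep => /eqP->.
Qed.

Lemma sum_ladim_leq (S : {set L}) : local_resolving E S -> \sum_i ladim (@sadj (H i)) <= #|S|.
Proof.
move=> res; rewrite card_slices; apply: leq_sum => i _.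
exact/ladim_leq/slice_local_adj_gen.
Qed.

Lemma sum_ladim_leq_ldim : \sum_i ladim (@sadj (H i)) <= ldim E.
Proof. by have [S res <-] := ldim_attained lex_adj_irr; exact: sum_ladim_leq. Qed.

Lemma dist_lexv_nb i j (v y : H i) (w : H j) : e i j -> sadj v y ->
  dist E (lexv y) (lexv v) = dist E (lexv y) (lexv w).
Proof.
move=> eij avy; have nij : i != j by apply: contraTneq eij => ->; rewrite irr_e.
rewrite dist_lexv_fibre dist_lexv // dist_adj // (dist2E (@sadj_irr _)) sadj_sym avy.
by case: (y =P v) avy => // ->; rewrite sadj_irr.
Qed.

Lemma resolving_separator (S : {set L}) i j (v : H i) (w : H j) :
  local_resolving E S -> e i j ->
  slice S i \subset open_nb (@sadj (H i)) v -> slice S j \subset open_nb (@sadj (H j)) w ->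
  exists k, [/\ k != i, k != j, slice S k != set0 & dist e k i != dist e k j].
Proof.
move=> /forallP res eij sub_i sub_j.
have /implyP := forallP (res (lexv v)) (lexv w); rewrite lex_adjE eij => /(_ isT).
case/existsP=> -[k y]; rewrite -[existT _ k y]/(lexv y) => /andP[yS sep].
have [ki|nki] := eqVneq k i.
  subst k; have /(subsetP sub_i) : y \in slice S i by rewrite inE.
  by rewrite inE => avy; rewrite (dist_lexv_nb w eij avy) eqxx in sep.
have [kj|nkj] := eqVneq k j.
  subst k; have /(subsetP sub_j) : y \in slice S j by rewrite inE.
  rewrite sym_e in eij; rewrite inE => awy.
  by rewrite (dist_lexv_nb v eij awy) eqxx in sep.
exists k; split => //; last by rewrite !dist_lexv in sep.
by apply/set0Pn; exists y; rewrite inE.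
Qed.

Definition spread_union : {set L} :=
  [set p | tagged p \in spread_basis (@sadj (H (tag p)))].

Lemma slice_spread_union i : slice spread_union i = spread_basis (@sadj (H i)).
Proof. by apply/setP=> x; rewrite !inE. Qed.

Lemma card_spread_union : #|spread_union| = \sum_i ladim (@sadj (H i)).
Proof.
rewrite card_slices; apply: eq_bigr => i _.
by rewrite slice_spread_union; case: (spread_basisP (@sadj_irr (H i))).
Qed.

Lemma spread_union_fibre i (v w : H i) : sadj v w ->
  exists2 s, s \in spread_union & dist E s (lexv v) != dist E s (lexv w).
Proof.
move=> avw; have [/forallP gen _] := spread_basisP (@sadj_irr (H i)).
have /existsP[x /andP[xB sep]] := implyP (forallP (gen v) w) avw.
by exists (lexv x); rewrite ?inE // !dist_lexv_fibre; apply: contra sep => /eqP[->].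
Qed.

Lemma spread_union_uncovered i j (v : H i) (w : H j) : e i j -> ~ in_calG (@sadj (H i)) ->
  exists2 s, s \in spread_union & dist E s (lexv v) != dist E s (lexv w).
Proof.
move=> eij notG; have nij : i != j by apply: contraTneq eij => ->; rewrite irr_e.
have /forallP/(_ v)/subsetPn[x xB] := spread_basis_uncovered notG.
rewrite inE => nvx; exists (lexv x); rewrite ?inE //.
rewrite dist_lexv_fibre dist_lexv // dist_adj // (dist2E (@sadj_irr _)) sadj_sym (negbTE nvx).
by case: (x == v).
Qed.

Lemma spread_union_outside k i j : ~ edgeless (@sadj (H k)) -> k != i -> k != j ->
  dist e k i != dist e k j -> forall (v : H i) (w : H j),
  exists2 s, s \in spread_union & dist E s (lexv v) != dist E s (lexv w).
Proof.
move=> edgy nki nkj sep v w.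
have /set0Pn[x xB] : spread_basis (@sadj (H k)) != set0.
  apply: contra_notN edgy => /eqP B0; apply: local_adj_gen0_edgeless.
  by case: (spread_basisP (@sadj_irr (H k))); rewrite B0.
by exists (lexv x); rewrite ?inE // !dist_lexv.
Qed.

Definition in_VE u : Prop := ~ in_TG e u /\ edgeless (@sadj (H u)).

Definition calG_edges_separated : Prop :=
  forall ui uj : T,
    e ui uj -> in_calG (@sadj (H ui)) -> in_calG (@sadj (H uj)) ->
    ~~ true_twins e ui uj ->
    exists u : T, ~ in_VE u /\ u != ui /\ u != uj /\ dist e u ui != dist e u uj.

Definition calG_twin_free : Prop :=
  forall ui uj : T, true_twins e ui uj ->
    in_calG (@sadj (H ui)) -> in_calG (@sadj (H uj)) -> ui = uj.

Lemma separator_not_edgeless i j u : calG_twin_free -> e i j ->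
  ~ in_VE u -> u != i -> u != j -> dist e u i != dist e u j ->
  exists k, [/\ ~ edgeless (@sadj (H k)), k != i, k != j & dist e k i != dist e k j].
Proof.
move=> twin_free eij notVE nui nuj sep.
have [edgeless_u|] := classic (edgeless (@sadj (H u))); last by exists u.
have [y [nyu tw]] : in_TG e u by apply: NNPP => notT; apply: notVE; split.
have nuy : u != y by rewrite eq_sym.
have [nyi nyj sep'] := twin_separates sym_e irr_e tw nuy eij nui nuj sep.
exists y; split => // edgeless_y.
have Gu := in_calG_edgeless (svert_nonempty (H u)) edgeless_u.
have Gy := in_calG_edgeless (svert_nonempty (H y)) edgeless_y.
by rewrite (twin_free u y tw Gu Gy) eqxx in nuy.
Qed.

Lemma spread_union_resolving :
  calG_edges_separated -> calG_twin_free -> local_resolving E spread_union.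
Proof.
move=> separated twin_free; apply/forallP=> -[i v]; apply/forallP=> -[j w].
rewrite -[existT _ i v]/(lexv v) -[existT _ j w]/(lexv w) lex_adjE.
apply/implyP=> /orP[eij|/andP[/eqP ij]]; last first.
  subst j; rewrite tagged_asE => /spread_union_fibre[s sS sep].
  by apply/existsP; exists s; rewrite sS.
suff [s sS sep] : exists2 s, s \in spread_union & dist E s (lexv v) != dist E s (lexv w).
  by apply/existsP; exists s; rewrite sS.
have [Gi|notGi] := classic (in_calG (@sadj (H i))); last exact: spread_union_uncovered.
have [Gj|notGj] := classic (in_calG (@sadj (H j))); last first.
  rewrite sym_e in eij; have [s sS sep] := spread_union_uncovered w v eij notGj.
  by exists s; rewrite // eq_sym.
have not_twins : ~~ true_twins e i j.
  apply/negP=> tw; have ij := twin_free i j tw Gi Gj.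
  by rewrite ij irr_e in eij.
have [u [notVE [nui [nuj sep]]]] := separated i j eij Gi Gj not_twins.
have [k [edgy nki nkj sep']] := separator_not_edgeless twin_free eij notVE nui nuj sep.
exact: spread_union_outside edgy nki nkj sep' v w.
Qed.

Lemma optimal_slices (S : {set L}) : local_resolving E S ->
  #|S| = \sum_i ladim (@sadj (H i)) -> forall i, local_adj_basis (@sadj (H i)) (slice S i).
Proof.
move=> res cardS i; split; first exact: slice_local_adj_gen.
have slice_min k :
    ladim (@sadj (H k)) <= #|slice S k| ?= iff (ladim (@sadj (H k)) == #|slice S k|).
  exact/leqif_eq/ladim_leq/slice_local_adj_gen.
have [_] := leqif_sum (fun k (_ : true) => slice_min k).
by rewrite -card_slices cardS eqxx => /esym/forall_inP/(_ i isT)/eqP.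
Qed.

Lemma ldim_eq_sum_conditions : ldim E = \sum_i ladim (@sadj (H i)) ->
  calG_edges_separated /\ calG_twin_free.
Proof.
move=> ldim_sum; have [S res cardS] := ldim_attained lex_adj_irr.
have basis := optimal_slices res (etrans cardS ldim_sum).
have separator i j : e i j -> in_calG (@sadj (H i)) -> in_calG (@sadj (H j)) ->
    exists k, [/\ k != i, k != j, slice S k != set0 & dist e k i != dist e k j].
  move=> eij /(_ _ (basis i))[v sub_i] /(_ _ (basis j))[w sub_j].
  exact: resolving_separator res eij sub_i sub_j.
split=> [i j eij Gi Gj _ | i j tw Gi Gj].
  have [k [nki nkj S_k sep]] := separator i j eij Gi Gj.
  exists k; split=> //; case=> _ edgeless_k.
  by have [_ cardSk] := basis k; rewrite -cards_eq0 cardSk ladim_edgeless in S_k.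
apply/eqP; apply: contraT => nij.
have [k [nki nkj _]] := separator i j (true_twins_adj tw nij) Gi Gj.
by rewrite !(dist_sym sym_e k) (twin_dist tw) ?eqxx.
Qed.

Lemma conditions_ldim_eq_sum : calG_edges_separated -> calG_twin_free ->
  ldim E = \sum_i ladim (@sadj (H i)).
Proof.
move=> separated twin_free; apply/eqP; rewrite eqn_leq sum_ladim_leq_ldim andbT.
by rewrite -card_spread_union ldim_leq // spread_union_resolving.
Qed.

End LexProduct.

Theorem corollary3 (T : finType) (e : rel T) (H : T -> sgraph) :
  symmetric e -> irreflexive e ->
  (forall x y, connect e x y) -> 2 <= #|T| ->
  ldim (lex_adj e H) = \sum_(i : T) ladim (@sadj (H i))
  <->
  ((forall ui uj : T,
      e ui uj -> in_calG (@sadj (H ui)) -> in_calG (@sadj (H uj)) ->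
      ~~ true_twins e ui uj ->
      exists u : T,
        ~ (~ in_TG e u /\ edgeless (@sadj (H u))) /\ u != ui /\ u != uj /\
        dist e u ui != dist e u uj)
   /\
   (forall ui uj : T, true_twins e ui uj ->
      in_calG (@sadj (H ui)) -> in_calG (@sadj (H uj)) -> ui = uj)).
Proof.
move=> sym_e irr_e connected card_T.
have no_isolated i : exists j, e i j := exists_neighbor i connected card_T.
split; first exact: ldim_eq_sum_conditions.
by case; exact: conditions_ldim_eq_sum.
Qed.
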